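(* Let $\rho^0\in\Lambda^*(x_0)$. Then $\rho^0$ is the outcome of a subgame perfect equilibrium in $(\mathcal{X},x_0)$.
   Context: Games: an arena $G=(\Pi,V,(V_i)_{i\in\Pi},E)$ has finite player set $\Pi$, finite vertex set $V$ ($|V|\ge2$, $|\Pi|\le|V|$), partition $(V_i)$ and edges $E$ with every vertex having a successor. A quantitative reachability game has targets $F_i\subseteq V$ and $\mathrm{Cost}_i(\rho)=$ least $k$ with $\rho_k\in F_i$ (or $+\infty$). Strategies map histories ending in $V_i$ to successors; a profile $\sigma$ has outcome $\langle\sigma\rangle_{v_0}$. $\sigma$ is a Nash equilibrium if no player can strictly decrease his cost of the outcome by unilaterally changing his strategy; it is a subgame perfect equilibrium if for every history $hv$ from the initial vertex, $\sigma_{|h}$ ($\sigma_{i|h}(h')=\sigma_i(hh')$) is a Nash equilibrium in the game from $v$ with costs $\rho\mapsto\mathrm{Cost}_i(h\rho)$. Extended game of $(\mathcal{G},v_0)$: $\mathcal{X}$ is the reachability game on arena $X$ with $V^X=V\times2^\Pi$, $((v,I),(v',I'))\in E^X$ iff $(v,v')\in E$ and $I'=I\cup\{i:v'\in F_i\}$, $(v,I)\in V^X_i$ iff $v\in V_i$, targets $F^X_i=\{(v,I):i\in I\}$; $x_0=(v_0,\{i:v_0\in F_i\})$. $I(u)$ is the second component of $u$. $\mathcal{I}$ is the set of $I$ with some $(v,I)$ reachable from $x_0$, $N=|\mathcal{I}|$, and $J_1<\dots<J_N$ a fixed total order of $\mathcal{I}$ extending $I<I'$ iff $I\ne I'$ and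 some $(v',I')$ is reachable from some $(v,I)$. $V^{\ge J_n}=\{(v,J_m):v\in V,m\ge n\}$. Labelings: for $\lambda:V^X\to\mathbb{N}\cup\{+\infty\}$, a play $\rho$ of $X$ is $\lambda$-consistent if $\mathrm{Cost}_i(\rho_{\ge n})\le\lambda(\rho_n)$ for all $n$ and $i$ with $\rho_n\in V^X_i$. $\lambda^0(u)=0$ if $u\in V^X_i$ and $i\in I(u)$, else $+\infty$. The update of $\lambda^k$ w.r.t. $V^{\ge J_n}$ keeps values outside $V^{\ge J_n}$ and for $u\in V^{\ge J_n}\cap V^X_i$ sets $\lambda^{k+1}(u)=0$ if $i\in I(u)$, otherwise $1+\min_{(u,u')\in E^X}\sup\{\mathrm{Cost}_i(\rho):\rho\in\Lambda^k(u')\}$, $\Lambda^k(u')$ being the $\lambda^k$-consistent plays from $u'$ and $1+(+\infty)=+\infty$. The sequence is generated by $n_0=N$, $\lambda^{k+1}=$ update of $\lambda^k$ w.r.t. $V^{\ge J_{n_k}}$, $n_{k+1}=n_k-1$ if $\lambda^{k+1}=\lambda^k$ and $n_k>1$, else $n_{k+1}=n_k$. It eventually becomes constant, equal to $\lambda^*$; $\Lambda^*(v)$ is the set of $\lambda^*$-consistent plays from $v$. *)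

From mathcomp Require Import all_boot.
From Stdlib Require Import ClassicalEpsilon.
Set Implicit Arguments. Unset Strict Implicit. Unset Printing Implicit Defensive.

(* Costs in N u {+oo}: Some n = n, None = +oo. *)
Definition cost := option nat.
Definition cle (a b : cost) : bool :=
  match a, b with
  | _, None => true
  | None, Some _ => false
  | Some m, Some n => m <= n
  end.
Definition clt (a b : cost) : bool :=
  match a, b with
  | Some m, Some n => m < n
  | Some _, None => true
  | None, _ => false
  end.
Definition cmin (a b : cost) : cost := if cle a b then a else b.
Definition csucc (a : cost) : cost := omap S a.

Definition pbool (P : Prop) : bool :=
  if excluded_middle_informative P then true else false.

Definition first_hit (P : nat -> bool) : cost :=
  match excluded_middle_informative (exists n, P n) with
  | left H => Some (ex_minn H)
  | right _ => None
  end.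

Lemma csup_ex (S : cost -> Prop) :
  (exists m, forall c, S c -> cle c (Some m)) ->
  exists m, pbool (forall c, S c -> cle c (Some m)).
Proof.
case=> m Hm; exists m; rewrite /pbool.
by case: excluded_middle_informative.
Qed.

(* supremum in N u {+oo} (least upper bound; sup of the empty set is 0) *)
Definition csup (S : cost -> Prop) : cost :=
  match excluded_middle_informative (exists m, forall c, S c -> cle c (Some m)) with
  | left H => Some (ex_minn (csup_ex H))
  | right _ => None
  end.

Section Game.
Variables (Pl V : finType) (owner : V -> Pl) (E : rel V) (F : Pl -> {set V}).

Definition VX : finType := (V * {set Pl})%type.
Definition EX : rel VX :=
  fun u u' => E u.1 u'.1 && (u'.2 == u.2 :|: [set i | u'.1 \in F i]).
Definition ownerX (u : VX) : Pl := owner u.1.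
Definition initX (v0 : V) : VX := (v0, [set i | v0 \in F i]).

Definition is_playX (rho : nat -> VX) : Prop := forall n, EX (rho n) (rho n.+1).
(* Cost_i in the extended game: target F^X_i = {(v,I) | i \in I} *)
Definition CostX (i : Pl) (rho : nat -> VX) : cost :=
  first_hit (fun n => i \in (rho n).2).

Definition consistent (lam : VX -> cost) (rho : nat -> VX) : Prop :=
  forall n, cle (CostX (ownerX (rho n)) (fun k => rho (n + k))) (lam (rho n)).
Definition LamPlays (lam : VX -> cost) (u : VX) (rho : nat -> VX) : Prop :=
  [/\ rho 0 = u, is_playX rho & consistent lam rho].

(* the set \mathcal I and its admissible total orders, given as a duplicate-free
   enumeration s = [:: J_1; ...; J_N] *)
Definition reachI (x0 : VX) : {set {set Pl}} :=
  [set I | [exists v, connect EX x0 (v, I)]].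
Definition reach_lt (I I' : {set Pl}) : bool :=
  (I != I') && [exists v, exists v', connect EX (v, I) (v', I')].
Definition valid_order (x0 : VX) (s : seq {set Pl}) : Prop :=
  [/\ uniq s, s =i reachI x0 &
      forall I I', I \in s -> I' \in s -> reach_lt I I' -> index I s < index I' s].

(* labelings; indices n are 0-based: V^{>= J_(n+1)} = {u | u.2 \in drop n s} *)
Definition lam0 : {ffun VX -> cost} :=
  [ffun u => if ownerX u \in u.2 then Some 0 else None].

Definition update (s : seq {set Pl}) (n : nat) (lam : {ffun VX -> cost})
  : {ffun VX -> cost} :=
  [ffun u => if u.2 \in drop n s then
               (if ownerX u \in u.2 then Some 0 else
                 csucc (\big[cmin/None]_(u' | EX u u')
                          csup (fun c => exists rho,
                                  LamPlays lam u' rho /\ c = CostX (ownerX u) rho)))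
             else lam u].

Definition lam_step (s : seq {set Pl}) (st : {ffun VX -> cost} * nat) :=
  let: (lam, n) := st in
  let lam' := update s n lam in
  (lam', if (lam' == lam) && (0 < n) then n.-1 else n).

(* lambda^k, starting from n_0 = N (i.e. 0-based index N-1) *)
Definition lam_seq (s : seq {set Pl}) (k : nat) : {ffun VX -> cost} :=
  (iter k (lam_step s) (lam0, (size s).-1)).1.

(* strategy profiles: sigma p u = successor chosen (by the owner of u)
   at history p ++ [:: u] *)
Definition profile := seq VX -> VX -> VX.
Definition valid_profile (sigma : profile) : Prop := forall p u, EX u (sigma p u).

Definition outc (sigma : profile) (h : seq VX) (v : VX) (k : nat) : VX :=
  (iter k (fun st : seq VX * VX => (rcons st.1 st.2, sigma st.1 st.2)) (h, v)).2.

Definition catp (h : seq VX) (rho : nat -> VX) (k : nat) : VX :=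
  if k < size h then nth (rho 0) h k else rho (k - size h).

Definition deviation (i : Pl) (sigma sigma' : profile) : Prop :=
  valid_profile sigma' /\ forall p u, ownerX u != i -> sigma' p u = sigma p u.

(* sigma_{|h} is a Nash equilibrium from v with costs rho |-> Cost_i(h rho) *)
Definition NE_after (sigma : profile) (h : seq VX) (v : VX) : Prop :=
  forall i sigma', deviation i sigma sigma' ->
    ~~ clt (CostX i (catp h (outc sigma' h v))) (CostX i (catp h (outc sigma h v))).

Definition hist_from (x0 : VX) (t : seq VX) : bool :=
  if t is a :: t' then (a == x0) && path EX a t' else false.

Definition SPE (sigma : profile) (x0 : VX) : Prop :=
  valid_profile sigma /\
  forall h v, hist_from x0 (rcons h v) -> NE_after sigma h v.

End Game.

(* Deviations are deterred by punishment. After every history the profile follows a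
   current plan, a [lam_star]-consistent play from the current vertex, initially [rho0].
   When a player leaves the plan, the new plan is a consistent play from the vertex he moved
   to that maximises his cost. On reachable vertices [lam_star] is a fixpoint of the update,
   so his cost along the old plan was at most 1 + the worst consistent cost from the best
   successor, which is at most 1 + his cost under the punishment: the deviation cannot pay.
   This needs every vertex to have a consistent play (by induction along the labelings) and
   the worst consistent cost to be attained. Both come from a lasso argument: on a consistent
   play every position with a finite nontrivial label forces its owner into his target
   within a bounded number of steps, so a long window of unconstrained positions appears
   early, and a cycle inside it can be repeated forever. *)

From mathcomp Require Import all_boot.
From Stdlib Require Import ClassicalEpsilon Classical.
From mathcomp Require Import zify.
Set Implicit Arguments. Unset Strict Implicit. Unset Printing Implicit Defensive.

Lemma cle_refl c : cle c c.
Proof. by case: c => /=. Qed.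

Lemma cle_None c : cle c None.
Proof. by case: c. Qed.

Lemma cle0 c : cle (Some 0) c.
Proof. by case: c. Qed.

Lemma cle_trans a b c : cle a b -> cle b c -> cle a c.
Proof. by case: a; case: b; case: c => //= x y z; apply: leq_trans. Qed.

Lemma cle_total a b : cle a b || cle b a.
Proof. by case: a; case: b => //= x y; apply: leq_total. Qed.

Lemma cleNclt a b : cle a b = ~~ clt b a.
Proof. by case: a; case: b => //= x y; rewrite leqNgt. Qed.

Lemma cle_succ a b : cle a b -> cle (csucc a) (csucc b).
Proof. by case: a; case: b. Qed.

Lemma cminl a b : cle (cmin a b) a.
Proof.
rewrite /cmin; case: ifP => [_|h]; first exact: cle_refl.
by move: (cle_total a b); rewrite h.
Qed.

Lemma cminr a b : cle (cmin a b) b.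
Proof. by rewrite /cmin; case: ifP => // _; apply: cle_refl. Qed.

Lemma cminP a b : cmin a b = a \/ cmin a b = b.
Proof. by rewrite /cmin; case: ifP; [left | right]. Qed.

Lemma cmin_mono a b a' b' : cle a a' -> cle b b' -> cle (cmin a b) (cmin a' b').
Proof.
move=> ha hb; case: (cminP a' b') => ->.
  exact: cle_trans (cminl _ _) ha.
exact: cle_trans (cminr _ _) hb.
Qed.

Section BigCmin.
Variables (T : finType) (P : pred T).

Lemma big_cmin_le (f : T -> cost) x : P x -> cle (\big[cmin/None]_(i | P i) f i) (f x).
Proof.
move=> Px; rewrite unlock; have : x \in index_enum T by rewrite mem_index_enum.
elim: (index_enum T) => // y r IH; rewrite inE /= => /orP [/eqP <- | xr].
  by rewrite Px; apply: cminl.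
case: (P y); last exact: IH.
exact: cle_trans (cminr _ _) (IH xr).
Qed.

Lemma big_cmin_attained (f : T -> cost) m :
  \big[cmin/None]_(i | P i) f i = Some m -> exists2 x, P x & f x = Some m.
Proof.
apply: (big_ind (fun c => c = Some m -> exists2 x, P x & f x = Some m)) => //.
  by move=> a b ha hb; case: (cminP a b) => ->.
by move=> i Pi fi; exists i.
Qed.

Lemma big_cmin_mono (f g : T -> cost) :
  (forall x, P x -> cle (f x) (g x)) ->
  cle (\big[cmin/None]_(i | P i) f i) (\big[cmin/None]_(i | P i) g i).
Proof.
move=> fg; apply: (big_rec2 (fun a b => cle a b)) => [|i a b Pi]; first exact: cle_refl.
by apply: cmin_mono; apply: fg.
Qed.

End BigCmin.

Lemma pboolP (P : Prop) : pbool P <-> P.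
Proof. by rewrite /pbool; case: excluded_middle_informative. Qed.

Lemma csup_ub (S : cost -> Prop) c : S c -> cle c (csup S).
Proof.
rewrite /csup; case: excluded_middle_informative => [H|_] Sc; last exact: cle_None.
by case: ex_minnP => m /pboolP ub _; apply: ub.
Qed.

Lemma csup_le (S : cost -> Prop) d : (forall c, S c -> cle c d) -> cle (csup S) d.
Proof.
case: d => [m|] Sm; last exact: cle_None.
rewrite /csup; case: excluded_middle_informative => [H|[]]; last by exists m.
by case: ex_minnP => n _ /=; apply; apply/pboolP.
Qed.

Lemma csup_mono (S S' : cost -> Prop) :
  (forall c, S c -> S' c) -> cle (csup S) (csup S').
Proof. by move=> SS'; apply: csup_le => c Sc; apply/csup_ub/SS'. Qed.

Lemma csup_unbounded (S : cost -> Prop) m :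
  csup S = None -> exists c, S c /\ ~~ cle c (Some m).
Proof.
rewrite /csup; case: excluded_middle_informative => // H _.
apply: NNPP => hn; apply: H; exists m => c Sc.
by apply: NNPP => hc; apply: hn; exists c; split => //; apply/negP.
Qed.

Lemma csup_attained (S : cost -> Prop) m :
  csup S = Some m -> (exists c, S c) -> S (Some m).
Proof.
rewrite /csup; case: excluded_middle_informative => // H [<-] [c0 Sc0].
case: ex_minnP => n /pboolP ub least; apply: NNPP => Sn.
have ub' : forall c, S c -> cle c (Some n.-1).
  move=> c Sc; have := ub _ Sc; case: c Sc => // k Sk /= kn.
  have : k != n by apply/eqP => ekn; apply: Sn; rewrite -ekn.
  lia.
have n0 : n = 0 by have := least _ (proj2 (pboolP _) ub'); lia.
have := ub _ Sc0; move: Sc0; rewrite n0; case: c0 => [[|k]|] //= S0 _.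
by rewrite n0 in Sn.
Qed.

Section FirstHit.
Implicit Types P Q : nat -> bool.

Lemma first_hit_ext P Q : P =1 Q -> first_hit P = first_hit Q.
Proof.
move=> PQ; rewrite /first_hit.
case: excluded_middle_informative => [H|H]; case: excluded_middle_informative => [H'|H'].
- by congr Some; apply: eq_ex_minn.
- by case: H'; case: H => n Pn; exists n; rewrite -PQ.
- by case: H; case: H' => n Qn; exists n; rewrite PQ.
- by [].
Qed.

Lemma first_hit_SomeP P t :
  first_hit P = Some t -> P t /\ forall m, m < t -> ~~ P m.
Proof.
rewrite /first_hit; case: excluded_middle_informative => // H [<-].
case: ex_minnP => n Pn least; split => // m mn; apply/negP => Pm.
by move: (least _ Pm); rewrite leqNgt mn.
Qed.

Lemma first_hit_NoneP P : first_hit P = None -> forall m, ~~ P m.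
Proof.
rewrite /first_hit; case: excluded_middle_informative => // H _ m.
by apply/negP => Pm; apply: H; exists m.
Qed.

Lemma first_hit_Some P t :
  P t -> (forall m, m < t -> ~~ P m) -> first_hit P = Some t.
Proof.
move=> Pt before; rewrite /first_hit.
case: excluded_middle_informative => [H|[]]; last by exists t.
congr Some; case: ex_minnP => n Pn least; apply/eqP; rewrite eqn_leq least //.
by rewrite leqNgt; apply: contraL Pn; apply: before.
Qed.

Lemma first_hit_None P : (forall m, ~~ P m) -> first_hit P = None.
Proof.
move=> never; rewrite /first_hit; case: excluded_middle_informative => // [[m Pm]].
by move: (never m); rewrite Pm.
Qed.

Lemma first_hit_shift P n : (forall m, m < n -> ~~ P m) ->
  first_hit P = omap (addn n) (first_hit (fun m => P (n + m))).
Proof.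
move=> before; case e: (first_hit (fun m => P (n + m))) => [t|] /=.
  case: (first_hit_SomeP e) => Pt after; apply: first_hit_Some => // m mt.
  case: (ltnP m n) => nm; first exact: before.
  by rewrite -(subnKC nm); apply: after; rewrite ltn_subLR.
apply: first_hit_None => m; case: (ltnP m n) => nm; first exact: before.
by rewrite -(subnKC nm); apply: first_hit_NoneP e _.
Qed.

Lemma first_hit_prefix P Q n :
  (forall m, m <= n -> P m = Q m) -> P n -> first_hit P = first_hit Q.
Proof.
move=> PQ Pn; case e: (first_hit P) => [t|]; last by move: (first_hit_NoneP e n); rewrite Pn.
case: (first_hit_SomeP e) => Pt before.
have tn : t <= n by rewrite leqNgt; apply: contraL Pn; apply: before.
symmetry; apply: first_hit_Some => [|m mt]; first by rewrite -PQ.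
by rewrite -PQ ?before // (leq_trans (ltnW mt)).
Qed.

End FirstHit.

Lemma pigeonhole_nat (T : finType) (f : nat -> T) p :
  exists a b, [/\ p <= a, a < b, b <= p + #|T| & f a = f b].
Proof.
pose g (i : 'I_#|T|.+1) := f (p + i).
have /injectivePn [i [j ij gij]] : ~~ injectiveb g.
  by apply/injectiveP => /leq_card; rewrite card_ord ltnn.
wlog lt_ij : i j ij gij / i < j.
  move=> wl; case: (ltngtP i j) => [|ji|/val_inj eij]; first exact: wl.
    by apply: (wl j i) => //; rewrite eq_sym.
  by rewrite eij eqxx in ij.
exists (p + i), (p + j); split => //; first exact: leq_addr.
  by rewrite ltn_add2l.
by rewrite leq_add2l -ltnS ltn_ord.
Qed.

Definition lasso_index (a d m : nat) : nat := if m < a then m else a + (m - a) %% d.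

Lemma lasso_index_small a d m : m < a -> lasso_index a d m = m.
Proof. by rewrite /lasso_index => ->. Qed.

Lemma lasso_index_cycle a d m : 0 < d -> a <= m ->
  a <= lasso_index a d m < a + d.
Proof.
by move=> d0 am; rewrite /lasso_index ltnNge am /= leq_addr ltn_add2l ltn_pmod.
Qed.

Lemma lasso_indexS a d m : 0 < d ->
  lasso_index a d m.+1 =
  if (lasso_index a d m).+1 == a + d then a else (lasso_index a d m).+1.
Proof.
move=> d0; rewrite /lasso_index; case: (ltnP m.+1 a) => h1.
  by rewrite (ltnW h1) ifN //; apply/negP => /eqP; lia.
case: (ltnP m a) => h2.
  have -> : a = m.+1 by lia.
  by rewrite subnn mod0n addn0 ifN //; apply/negP => /eqP; lia.
rewrite subSn // -addn1 -modnDml addn1 -addnS.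
have := ltn_pmod (m - a) d0; set j := (m - a) %% d.
case: (ltngtP j.+1 d) => [lt _|//|<- _]; last by rewrite modnn addn0 eqxx.
by rewrite modn_small // ifN //; apply/negP => /eqP; lia.
Qed.

Section Plays.
Variables (Pl V : finType) (owner : V -> Pl) (E : rel V) (F : Pl -> {set V}).
Local Notation vertex := (VX Pl V).
Local Notation play := (nat -> vertex).
Local Notation own := (ownerX owner).
Local Notation Lam := (LamPlays owner E F).
Local Notation is_play := (is_playX E F).
Implicit Types (r : play) (x u : vertex) (lam : vertex -> cost) (i : Pl).

Definition shift r n : play := fun k => r (n + k).
Definition pcons x r : play := fun k => if k is k'.+1 then r k' else x.

Definition unconstrained lam x : bool := (own x \in x.2) || (lam x == None).

Lemma unconstrainedN_own lam x : ~~ unconstrained lam x -> own x \notin x.2.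
Proof. by rewrite negb_or => /andP []. Qed.

Lemma shift_pcons r n : shift r n =1 pcons (r n) (shift r n.+1).
Proof. by case=> [|k]; rewrite /shift /= ?addn0 ?addnS ?addSn. Qed.

Lemma CostX_ext i r r' : r =1 r' -> CostX i r = CostX i r'.
Proof. by move=> rr'; apply: first_hit_ext => n; rewrite rr'. Qed.

Lemma CostX_in i r : i \in (r 0).2 -> CostX i r = Some 0.
Proof. by move=> ir; apply: first_hit_Some. Qed.

Lemma CostX_pcons i x r : i \notin x.2 -> CostX i (pcons x r) = csucc (CostX i r).
Proof.
move=> ix; rewrite /CostX (@first_hit_shift _ 1) => [|[|//] _]; last exact: ix.
rewrite (@first_hit_ext _ (fun n => i \in (r n).2)) => [|m]; last by rewrite add1n.
by case: first_hit.
Qed.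

Lemma CostX_agree i r r' n : (forall k, k <= n -> r k = r' k) ->
  cle (CostX i r) (Some n) -> CostX i r' = CostX i r.
Proof.
case e: (CostX i r) => [t|] // rr' tn; case: (first_hit_SomeP e) => it _.
rewrite -e; symmetry; apply: (@first_hit_prefix _ _ t) => // k kt.
by rewrite rr' // (leq_trans kt tn).
Qed.

Lemma play_sets_mono r m n : is_play r -> m <= n -> (r m).2 \subset (r n).2.
Proof.
move=> rp; elim: n => [|n IH]; first by rewrite leqn0 => /eqP ->.
rewrite leq_eqVlt => /orP [/eqP -> // | mn]; apply: subset_trans (IH mn) _.
by case/andP: (rp n) => _ /eqP ->; apply: subsetUl.
Qed.

Lemma CostX_hit i r n : is_play r -> cle (CostX i r) (Some n) -> i \in (r n).2.
Proof.
move=> rp; case e: (CostX i r) => [t|] //= tn.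
by case: (first_hit_SomeP e) => it _; apply: subsetP (play_sets_mono rp tn) _ it.
Qed.

Lemma unconstrained_cle lam x r : unconstrained lam x -> r 0 = x ->
  cle (CostX (own x) r) (lam x).
Proof.
case/orP => [ox r0 | /eqP -> _]; last exact: cle_None.
by rewrite CostX_in ?r0 // cle0.
Qed.

Lemma is_play_shift r n : is_play r -> is_play (shift r n).
Proof. by move=> rp k; rewrite /shift addnS; apply: rp. Qed.

Lemma LamPlays_shift lam u r n : Lam lam u r -> Lam lam (r n) (shift r n).
Proof.
case=> _ rp rc; split; [by rewrite /shift addn0 | exact: is_play_shift |].
move=> k; rewrite /shift (@CostX_ext _ _ (fun l => r (n + k + l))); first exact: rc.
by move=> l; rewrite addnA.
Qed.

Lemma LamPlays_mono lam mu u r :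
  (forall x, cle (lam x) (mu x)) -> Lam lam u r -> Lam mu u r.
Proof. by move=> lam_mu [r0 rp rc]; split => // n; apply: cle_trans (rc n) (lam_mu _). Qed.

Lemma LamPlays_cost lam u r : Lam lam u r -> cle (CostX (own u) r) (lam u).
Proof. by case=> r0 _ rc; move: (rc 0); rewrite r0. Qed.

Lemma LamPlays_pcons lam x r :
  EX E F x (r 0) -> Lam lam (r 0) r -> cle (CostX (own x) (pcons x r)) (lam x) ->
  Lam lam x (pcons x r).
Proof.
move=> xr [_ rp rc] cx; split => //; first by case=> [|n] //; apply: rp.
case=> [|n]; first exact: cx.
rewrite (@CostX_ext _ _ (fun k => r (n + k))); first exact: rc.
by move=> k; rewrite addSn.
Qed.

Lemma eq_catp h r r' : r =1 r' -> catp h r =1 catp h r'.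
Proof. by move=> rr' m; rewrite /catp !rr'. Qed.

Lemma catp_prefix h r r' m : m < size h -> catp h r m = catp h r' m.
Proof. by move=> mh; rewrite /catp mh; apply: set_nth_default. Qed.

Lemma catp_size h r k : catp h r (size h + k) = r k.
Proof. by rewrite /catp ltnNge leq_addr addKn. Qed.

Lemma catp_agree h r r' m : r 0 = r' 0 -> m <= size h -> catp h r m = catp h r' m.
Proof.
move=> r0 mh; case: (ltnP m (size h)) => [|hm]; first exact: catp_prefix.
have -> : m = size h + 0 by lia.
by rewrite !catp_size.
Qed.

Lemma catp_rcons h x r : catp (rcons h x) r =1 catp h (pcons x r).
Proof.
move=> m; rewrite /catp size_rcons nth_rcons; case: (ltngtP m (size h)) => hm.
- by rewrite ltnW //; apply: set_nth_default.
- have -> : m - size h = (m - (size h).+1).+1 by lia.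
  by rewrite ltnS leqNgt hm.
- by rewrite hm ltnSn subnn.
Qed.

Lemma CostX_catp_mono i h r r' : cle (CostX i r) (CostX i r') ->
  cle (CostX i (catp h r)) (CostX i (catp h r')).
Proof.
move=> rr'; case: (boolP [exists m : 'I_(size h), i \in (catp h r m).2]).
  case/existsP=> m hit; rewrite /CostX.
  rewrite (@first_hit_prefix _ (fun k => i \in (catp h r' k).2) m) ?cle_refl //.
  by move=> k km; rewrite (@catp_prefix h r r') // (leq_ltn_trans km).
move/existsPn=> miss.
have cost_shift r1 : CostX i (catp h r1) = omap (addn (size h)) (CostX i r1).
  rewrite /CostX (@first_hit_shift _ (size h)) => [|k kh].
    by congr omap; apply: first_hit_ext => k; rewrite catp_size.
  by rewrite (catp_prefix _ r) //; apply: (miss (Ordinal kh)).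
rewrite !cost_shift; move: rr'.
by case: (CostX i r) => [a|]; case: (CostX i r') => [b|] //= ab; rewrite leq_add2l.
Qed.

Lemma quiet_window r (nt : pred nat) M L : is_play r ->
  (forall q, nt q -> exists j, j \notin (r q).2 /\ j \in (r (q + M)).2) ->
  exists2 p, p <= #|Pl|.+1 * (L + M) & forall q, p <= q < p + L -> ~~ nt q.
Proof.
move=> rp progress.
suff: forall k, (exists2 p, p <= k * (L + M) & forall q, p <= q < p + L -> ~~ nt q)
             \/ k <= #|(r (k * (L + M))).2|.
  by case/(_ #|Pl|.+1) => // /leq_trans/(_ (max_card _)); rewrite ltnn.
elim=> [|k [[p pk quiet] | IH]]; first by right.
  by left; exists p => //; apply: leq_trans pk _; rewrite leq_mul2r leqnSn orbT.
set t := k * (L + M).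
case: (boolP [exists q : 'I_L, nt (t + q)]) => [/existsP [q ntq] | /existsPn none].
  right; have [j [jq jqM]] := progress _ ntq.
  have jt : j \notin (r t).2.
    by apply: contra jq; apply/subsetP/play_sets_mono/leq_addr.
  apply: leq_trans (_ : #|j |: (r t).2| <= _); first by rewrite cardsU1 jt add1n.
  apply/subset_leq_card; rewrite subUset sub1set; apply/andP; split.
    apply: subsetP (play_sets_mono rp _) _ jqM.
    by rewrite mulSn -/t; have := ltn_ord q; lia.
  by apply: play_sets_mono; rewrite // mulSn -/t leq_addl.
left; exists t; first by rewrite leq_mul2r leqnSn orbT.
move=> q /andP [tq qL]; have := none (Ordinal (_ : q - t < L)).
by rewrite /= subnKC //; apply; lia.
Qed.

(* [M] bounds the finite labels; a window of [L] unconstrained positions starts within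
   [#|Pl|.+1] blocks of length [L + M] (see [quiet_window]) and contains a repeated vertex. *)
Lemma is_play_lasso r a d : is_play r -> 0 < d -> r (a + d) = r a ->
  is_play (fun m => r (lasso_index a d m)).
Proof.
move=> rp d0 rad m; rewrite (lasso_indexS _ _ d0).
by case: eqP => [e|_]; [rewrite -rad -e | ]; apply: rp.
Qed.

Definition horizon lam : nat :=
  let M := \max_(y : vertex) odflt 0 (lam y) in
  let L := #|vertex|.+1 + M in
  #|Pl|.+1 * (L + M) + L.

Lemma lasso_consistent lam r : is_play r ->
  (forall q, q < horizon lam -> ~~ unconstrained lam (r q) ->
     cle (CostX (own (r q)) (shift r q)) (lam (r q))) ->
  exists2 r', Lam lam (r 0) r' & forall m, exists2 t, t < horizon lam & r' m = r t.
Proof.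
move=> rp rc; set M := \max_(y : vertex) odflt 0 (lam y).
set L := #|vertex|.+1 + M.
have eL : L = #|vertex|.+1 + M by [].
have hN : horizon lam = #|Pl|.+1 * (L + M) + L by [].
have costM : forall q, q < horizon lam -> ~~ unconstrained lam (r q) ->
    cle (CostX (own (r q)) (shift r q)) (Some M).
  move=> q qN nq; apply: cle_trans (rc q qN nq) _; move: nq.
  rewrite /unconstrained negb_or => /andP [_]; case e: (lam (r q)) => [c|] // _.
  by move: (@leq_bigmax _ (fun y => odflt 0 (lam y)) (r q)); rewrite e.
pose nt q := (q < horizon lam) && ~~ unconstrained lam (r q).
have progress : forall q, nt q -> exists j, j \notin (r q).2 /\ j \in (r (q + M)).2.
  move=> q /andP [qN nq]; exists (own (r q)); split; first exact: unconstrainedN_own nq.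
  by have := CostX_hit (is_play_shift q rp) (costM q qN nq).
have [p pb quiet] := quiet_window L rp progress.
have [a [b [pa ab bK rab]]] := pigeonhole_nat r (p + M).
have d0 : 0 < b - a by rewrite subn_gt0.
have ebd : a + (b - a) = b by rewrite subnKC // ltnW.
have cycle_free : forall t, p <= t < b -> unconstrained lam (r t).
  move=> t /andP [pt tb]; have tL : t < p + L by lia.
  have tN : t < horizon lam by rewrite hN; lia.
  by have := quiet t; rewrite pt tL /nt tN /= negbK; apply.
exists (fun m => r (lasso_index a (b - a) m)); first split.
- rewrite /lasso_index; case: ifP => // /negbT; rewrite lt0n negbK => /eqP ->.
  by rewrite sub0n mod0n.
- by apply: is_play_lasso; rewrite // ebd rab.
- move=> m /=; case: (ltnP m a) => am.
    rewrite lasso_index_small //; case: (boolP (unconstrained lam (r m))) => um.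
      by apply: unconstrained_cle; rewrite // addn0 lasso_index_small.
    have mp : m < p.
      by rewrite ltnNge; apply: contraNN um => pm; apply: cycle_free; lia.
    have mN : m < horizon lam by rewrite hN; lia.
    rewrite (@CostX_agree _ (shift r m) _ M) ?costM //; first exact: rc.
    by move=> k kM; rewrite lasso_index_small //; lia.
  have /andP [al lb] := lasso_index_cycle d0 am.
  apply: unconstrained_cle; last by rewrite addn0.
  by apply: cycle_free; rewrite ebd in lb; lia.
- move=> m; exists (lasso_index a (b - a) m) => //; rewrite hN.
  case: (ltnP m a) => am; first by rewrite lasso_index_small //; lia.
  by have := lasso_index_cycle d0 am; rewrite ebd; lia.
Qed.

End Plays.

Section Update.
Variables (Pl V : finType) (owner : V -> Pl) (E : rel V) (F : Pl -> {set V}).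
Local Notation vertex := (VX Pl V).
Local Notation play := (nat -> vertex).
Local Notation own := (ownerX owner).
Local Notation Lam := (LamPlays owner E F).
Local Notation unconstrained := (unconstrained owner).
Implicit Types (r : play) (x u : vertex) (lam : vertex -> cost) (i : Pl).

Definition cost_set lam u i : cost -> Prop :=
  fun c => exists rho, Lam lam u rho /\ c = CostX i rho.

Definition update_value lam x : cost :=
  csucc (\big[cmin/None]_(u' | EX E F x u') csup (cost_set lam u' (own x))).

Lemma update_value_mono lam mu x :
  (forall y, cle (lam y) (mu y)) -> cle (update_value lam x) (update_value mu x).
Proof.
move=> lam_mu; apply/cle_succ/big_cmin_mono => u _.
apply: csup_mono => c [rho [rl ->]]; exists rho; split => //.
exact: LamPlays_mono lam_mu rl.
Qed.

Section Step.
Variables lam lam' : vertex -> cost.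
Hypothesis lam_nonempty : forall x, exists r, Lam lam x r.
Hypothesis lam'_le : forall x, cle (lam' x) (lam x).
Hypothesis lam'_update : forall x, unconstrained lam' x \/ lam' x = update_value lam x.

Definition optimal_move x a : bool :=
  EX E F x a && cle (csucc (csup (cost_set lam a (own x)))) (lam' x).

Lemma optimal_move_exists x : ~~ unconstrained lam' x -> exists a, optimal_move x a.
Proof.
move=> ux; case: (lam'_update x) => [ux' | e]; first by rewrite ux' in ux.
move: ux; rewrite /unconstrained e /update_value negb_or => /andP [_].
case e': (\big[cmin/None]_(u' | _) _) => [m|] // _.
have [a xa ea] := big_cmin_attained e'.
by exists a; rewrite /optimal_move xa e /update_value e' ea cle_refl.
Qed.

Lemma optimal_move_cost x a rho : optimal_move x a -> Lam lam a rho ->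
  own x \notin x.2 -> cle (CostX (own x) (pcons x rho)) (lam' x).
Proof.
case/andP=> _ opt rl ox; rewrite CostX_pcons //; apply: cle_trans opt.
by apply/cle_succ/csup_ub; exists rho.
Qed.

Lemma unconstrained_le x : unconstrained lam' x -> unconstrained lam x.
Proof.
rewrite /unconstrained => /orP [-> // | /eqP lx].
by move: (lam'_le x); rewrite lx orbC; case: (lam x).
Qed.

Lemma optimal_plays N x : exists2 r, Lam lam x r &
  forall q, q < N -> ~~ unconstrained lam' (r q) -> optimal_move (r q) (r q.+1).
Proof.
elim: N x => [|N IH] x; first by have [r rl] := lam_nonempty x; exists r.
have [y xy opt_y] : exists2 y, EX E F x y & (~~ unconstrained lam' x -> optimal_move x y).
  case: (boolP (unconstrained lam' x)) => ux.
    by have [r [r0 rp _]] := lam_nonempty x; exists (r 1) => //; rewrite -r0; apply: rp.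
  by have [a opt] := optimal_move_exists ux; exists a => //; case/andP: opt.
have [r rl good] := IH y; have r0 : r 0 = y by case: rl.
exists (pcons x r); last by case=> [_ /=|q /= qN]; [rewrite r0; apply: opt_y | apply: good].
apply: LamPlays_pcons; rewrite ?r0 //.
case: (boolP (unconstrained lam x)) => ux; first exact: unconstrained_cle.
have ux' : ~~ unconstrained lam' x by apply: contra ux; apply: unconstrained_le.
apply: cle_trans (lam'_le x); apply: optimal_move_cost (opt_y ux') rl _.
exact: unconstrainedN_own ux.
Qed.

Lemma update_nonempty x : exists r, Lam lam' x r.
Proof.
have [r rl good] := optimal_plays (horizon lam') x; have [r0 rp _] := rl.
have [q qN uq | r' rl' _] := @lasso_consistent _ _ owner E F lam' r rp.
  rewrite (CostX_ext _ (shift_pcons r q)).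
  apply: optimal_move_cost (good q qN uq) (LamPlays_shift _ rl) _.
  exact: unconstrainedN_own uq.
by exists r'; rewrite -r0.
Qed.

End Step.
End Update.

Section Iteration.
Variables (Pl V : finType) (owner : V -> Pl) (E : rel V) (F : Pl -> {set V}).
Variable s : seq {set Pl}.
Local Notation vertex := (VX Pl V).
Local Notation own := (ownerX owner).
Local Notation Lam := (LamPlays owner E F).
Local Notation lam_k := (lam_seq owner E F s).
Local Notation unconstrained := (unconstrained owner).
Local Notation update_value := (update_value owner E F).

Definition lam_index k : nat := (iter k (lam_step owner E F s) (lam0 owner, (size s).-1)).2.

Lemma lam_seqS k : lam_k k.+1 = update owner E F s (lam_index k) (lam_k k).
Proof. by rewrite /lam_seq /lam_index iterS; case: (iter _ _ _). Qed.

Lemma lam_indexS k : lam_index k.+1 =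
  if (lam_k k.+1 == lam_k k) && (0 < lam_index k) then (lam_index k).-1 else lam_index k.
Proof. by rewrite /lam_seq /lam_index iterS; case: (iter _ _ _). Qed.

Lemma lam_index_le k : lam_index k.+1 <= lam_index k.
Proof. by rewrite lam_indexS; case: ifP => // _; apply: leq_pred. Qed.

Lemma mem_drop_le (I : {set Pl}) m n : m <= n -> I \in drop n s -> I \in drop m s.
Proof. by move=> mn; rewrite -(subnK mn) -drop_drop; apply: mem_drop. Qed.

Lemma lam0E u : lam0 owner u = if own u \in u.2 then Some 0 else None.
Proof. by rewrite ffunE. Qed.

Lemma lam_seq_outside k u : u.2 \notin drop (lam_index k) s -> lam_k k u = lam0 owner u.
Proof.
elim: k => [//|k IH] uk.
have uk' : u.2 \notin drop (lam_index k) s.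
  by apply: contra uk; apply: mem_drop_le (lam_index_le k).
by rewrite lam_seqS /update ffunE (negbTE uk') IH.
Qed.

Lemma lam_seqSE k u : lam_k k.+1 u =
  if u.2 \in drop (lam_index k) s then
    (if own u \in u.2 then Some 0 else update_value (lam_k k) u)
  else lam0 owner u.
Proof. by rewrite lam_seqS /update ffunE; case: ifP => // /negbT /lam_seq_outside. Qed.

Lemma lam_seq_owned k u : own u \in u.2 -> lam_k k u = Some 0.
Proof. by move=> ou; case: k => [|k]; rewrite ?lam_seqSE lam0E ou //; case: ifP. Qed.

Lemma lam_seq_decr k u : cle (lam_k k.+1 u) (lam_k k u).
Proof.
elim: k u => [|k IH] u; case: (boolP (own u \in u.2)) => ou;
  try by rewrite !lam_seq_owned // cle_refl.
  by rewrite [lam_k 0 u]lam0E (negbTE ou) cle_None.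
rewrite [lam_k k.+2 u]lam_seqSE [lam_k k.+1 u]lam_seqSE (negbTE ou).
case: (boolP (u.2 \in drop (lam_index k) s)) => uk; last by rewrite lam0E (negbTE ou) cle_None.
by rewrite (mem_drop_le (lam_index_le k) uk); apply: update_value_mono.
Qed.

Lemma lam_seq_update k u :
  unconstrained (lam_k k.+1) u \/ lam_k k.+1 u = update_value (lam_k k) u.
Proof.
rewrite /unconstrained lam_seqSE; case: ifP => _; last by left; rewrite lam0E; case: ifP.
by case: ifP; [left | right].
Qed.

Lemma lam_seq_nonempty (total : forall v, exists v', E v v') k x :
  exists r, Lam (lam_k k) x r.
Proof.
elim: k x => [|k IH] x; last first.
  by apply: update_nonempty IH _ _ x => y; [apply: lam_seq_decr | apply: lam_seq_update].
have -> : lam_k 0 = lam0 owner by [].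
pose next (u : vertex) : vertex :=
  let v' := xchoose (total u.1) in (v', u.2 :|: [set i | v' \in F i]).
exists (fun n => iter n next x); split => // [n | n].
  by rewrite iterS /EX /next /= xchooseP eqxx.
apply: unconstrained_cle; last by rewrite addn0.
by rewrite /unconstrained ffunE; case: ifP.
Qed.

Lemma lam_star_fixpoint (lam_star : {ffun vertex -> cost}) :
  (exists K, forall k, K <= k -> lam_k k = lam_star) ->
  forall u, u.2 \in s -> own u \notin u.2 -> lam_star u = update_value lam_star u.
Proof.
case=> K lamK u us ou.
have index_down m : lam_index (K + m) = lam_index K - m.
  elim: m => [|m IH]; first by rewrite addn0 subn0.
  rewrite addnS lam_indexS -addnS !lamK ?leq_addr // eqxx IH /=.
  by case: (ltnP 0 (lam_index K - m)) => h; lia.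
have := lamK (K + lam_index K).+1 (leqW (leq_addr _ _)).
rewrite lam_seqS index_down subnn lamK ?leq_addr // => fix_eq.
by rewrite -{1}fix_eq /update ffunE drop0 us (negbTE ou).
Qed.

End Iteration.

Section MaxCost.
Variables (Pl V : finType) (owner : V -> Pl) (E : rel V) (F : Pl -> {set V}).
Local Notation vertex := (VX Pl V).
Local Notation Lam := (LamPlays owner E F).
Variable lam : vertex -> cost.
Hypothesis lam_nonempty : forall x, exists r, Lam lam x r.

Lemma max_cost_play u i : exists r,
  Lam lam u r /\ forall r', Lam lam u r' -> cle (CostX i r') (CostX i r).
Proof.
case e: (csup (cost_set owner E F lam u i)) => [m|].
  have [|r [rl rm]] := csup_attained e.
    by have [r rl] := lam_nonempty u; exists (CostX i r), r.
  exists r; split => // r' rl'; rewrite -rm -e.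
  by apply: csup_ub; exists r'.
have [_ [[rho [rl ->]] long]] := csup_unbounded (horizon lam) e.
case eT: (CostX i rho) long => [T|] /= long; last first.
  by exists rho; split => // r' _; rewrite eT cle_None.
have [r0 rp rc] := rl.
have [q qN _ | r rl' vertices] := @lasso_consistent _ _ owner E F lam rho rp.
  exact: rc.
exists r; split; first by rewrite -r0.
suff -> : CostX i r = None by move=> r' _; apply: cle_None.
apply: first_hit_None => m; have [t tN ->] := vertices m.
by case: (first_hit_SomeP eT) => _; apply; rewrite -ltnNge in long; lia.
Qed.

End MaxCost.

Section Outcomes.
Variables (Pl V : finType) (E : rel V) (F : Pl -> {set V}) (sigma : profile Pl V).
Local Notation vertex := (VX Pl V).

Definition outc_hist (h : seq vertex) (v : vertex) (k : nat) : seq vertex :=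
  (iter k (fun st : seq vertex * vertex => (rcons st.1 st.2, sigma st.1 st.2)) (h, v)).1.

Lemma outcS h v k : outc sigma h v k.+1 = sigma (outc_hist h v k) (outc sigma h v k).
Proof. by rewrite /outc /outc_hist iterS. Qed.

Lemma outc_histS h v k : outc_hist h v k.+1 = rcons (outc_hist h v k) (outc sigma h v k).
Proof. by rewrite /outc /outc_hist iterS. Qed.

Lemma size_outc_hist h v k : size (outc_hist h v k) = size h + k.
Proof. by elim: k => [|k IH]; rewrite ?addn0 // outc_histS size_rcons IH addnS. Qed.

Lemma catp_outc_hist h v k :
  catp (outc_hist h v k) (shift (outc sigma h v) k) =1 catp h (outc sigma h v).
Proof.
elim: k => [|k IH] m; first by rewrite /shift.
by rewrite outc_histS catp_rcons -IH (eq_catp _ (shift_pcons _ k)).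
Qed.

Lemma outc_reachable x0 h v : valid_profile E F sigma -> hist_from E F x0 (rcons h v) ->
  forall k, connect (EX E F) x0 (outc sigma h v k).
Proof.
move=> valid; case def_hv: (rcons h v) => [//|a t] /andP [/eqP <- path_t].
elim=> [|k IH].
  by apply: (path_connect path_t); rewrite -def_hv mem_rcons mem_head.
by apply: connect_trans IH (connect1 _); rewrite outcS; apply: valid.
Qed.

End Outcomes.

Section Punishment.
Variables (Pl V : finType) (owner : V -> Pl) (E : rel V) (F : Pl -> {set V}).
Local Notation vertex := (VX Pl V).
Local Notation play := (nat -> vertex).
Local Notation own := (ownerX owner).
Local Notation Lam := (LamPlays owner E F).
Variables (x0 : vertex) (lam : vertex -> cost) (rho0 : play).
Hypothesis lam_nonempty : forall x, exists r, Lam lam x r.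
Hypothesis lam_fixpoint : forall u, connect (EX E F) x0 u -> own u \notin u.2 ->
  lam u = update_value owner E F lam u.
Hypothesis rho0_consistent : Lam lam x0 rho0.

Definition punish (u : vertex) (i : Pl) : play :=
  proj1_sig (constructive_indefinite_description _ (max_cost_play lam_nonempty u i)).

Lemma punishP u i : Lam lam u (punish u i) /\
  forall r, Lam lam u r -> cle (CostX i r) (CostX i (punish u i)).
Proof. by rewrite /punish; case: constructive_indefinite_description. Qed.

(* Histories that do not start at [x0] are irrelevant; any consistent play will do there. *)
Definition start_plan (u : vertex) : play := if u == x0 then rho0 else punish u (own u).

Definition next_plan (P : play) (b : vertex) : play :=
  if P 1 == b then shift P 1 else punish b (own (P 0)).

Definition plan (p : seq vertex) (u : vertex) : play :=
  foldl next_plan (start_plan (head u p)) (behead (rcons p u)).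

Definition punishing_profile : profile Pl V := fun p u => plan p u 1.

Lemma plan_rcons p u b : plan (rcons p u) b = next_plan (plan p u) b.
Proof.
rewrite /plan; have -> : head b (rcons p u) = head u p by case: p.
have -> : behead (rcons (rcons p u) b) = rcons (behead (rcons p u)) b by case: p.
by rewrite foldl_rcons.
Qed.

Lemma plan_consistent p u : Lam lam u (plan p u).
Proof.
elim/last_ind: p u => [|p a IH] u.
  rewrite /plan /= /start_plan; case: eqP => [-> //|_].
  exact: (punishP _ _).1.
rewrite plan_rcons /next_plan; case: eqP => [<- | _]; last exact: (punishP _ _).1.
exact: LamPlays_shift (IH a).
Qed.

Lemma plan_start : plan [::] x0 = rho0.
Proof. by rewrite /plan /start_plan /= eqxx. Qed.

Lemma plan0 p u : plan p u 0 = u.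
Proof. by case: (plan_consistent p u). Qed.

Lemma punishing_profile_valid : valid_profile E F punishing_profile.
Proof.
move=> p u; case: (plan_consistent p u) => u0 up _.
by move: (up 0); rewrite u0.
Qed.

Lemma outc_punishing h v k : outc punishing_profile h v k = plan h v k.
Proof.
suff plan_outc : forall k, plan (outc_hist punishing_profile h v k)
    (outc punishing_profile h v k) =1 shift (plan h v) k.
  by have := plan_outc k 0; rewrite plan0 /shift addn0.
elim=> [|{}k IH] m; first by rewrite /shift add0n.
rewrite outc_histS [outc _ _ _ k.+1]outcS plan_rcons /next_plan /punishing_profile eqxx.
by rewrite /shift IH /shift addnA addn1.
Qed.

Lemma plan_step_cost i p u b : connect (EX E F) x0 u -> EX E F u b ->
  (plan p u 1 != b -> own u = i) ->
  cle (CostX i (plan p u)) (CostX i (pcons u (plan (rcons p u) b))).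
Proof.
move=> x0u ub deviator; rewrite plan_rcons /next_plan plan0.
case: eqP => [follow | /eqP deviation].
  have eP : pcons u (shift (plan p u) 1) =1 plan p u.
    by case=> [|k]; rewrite /= ?plan0 // /shift add1n.
  by rewrite (CostX_ext _ eP) cle_refl.
have ou := deviator deviation; rewrite ou.
case: (boolP (i \in u.2)) => iu; first by rewrite CostX_in ?plan0 // cle0.
rewrite CostX_pcons //; apply: (@cle_trans _ (lam u)).
  by rewrite -ou; apply/LamPlays_cost/plan_consistent.
rewrite lam_fixpoint ?ou //; apply: cle_succ; apply: cle_trans (big_cmin_le _ ub) _.
by apply: csup_le => c [r [rl ->]]; rewrite ou; apply: (punishP b i).2.
Qed.

Lemma punishing_profile_NE h v :
  hist_from E F x0 (rcons h v) -> NE_after owner E F punishing_profile h v.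
Proof.
move=> hv i sigma' [valid' unilateral]; rewrite -cleNclt.
(* [A k] follows [sigma'] for [k] steps and then the current plan. The cost of [i] only grows
   with [k], and [A t] agrees with the outcome of [sigma'] until [i] reaches his target at [t]. *)
pose A k := catp (outc_hist sigma' h v k)
  (plan (outc_hist sigma' h v k) (outc sigma' h v k)).
have A_mono k : cle (CostX i (A k)) (CostX i (A k.+1)).
  rewrite /A outc_histS (CostX_ext _ (catp_rcons _ _ _)); apply: CostX_catp_mono.
  apply: plan_step_cost; first exact: outc_reachable.
    by rewrite outcS; apply: valid'.
  rewrite outcS => moved; apply: contraNeq moved => not_i.
  by rewrite unilateral.
have A_chain k : cle (CostX i (A 0)) (CostX i (A k)).
  by elim: k => [|k IH]; [apply: cle_refl | apply: cle_trans IH (A_mono k)].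
rewrite (CostX_ext _ (eq_catp _ (outc_punishing h v))).
case e: (CostX i (catp h (outc sigma' h v))) => [t|]; last exact: cle_None.
apply: cle_trans (A_chain t) _; rewrite -e /CostX.
have [hit _] := first_hit_SomeP e.
rewrite (@first_hit_prefix (fun m => i \in (catp h (outc sigma' h v) m).2)
  (fun m => i \in (A t m).2) t) ?cle_refl // => m mt.
have agree : catp (outc_hist sigma' h v t) (shift (outc sigma' h v) t) m = A t m.
  by apply: catp_agree; [rewrite plan0 /shift addn0 | rewrite size_outc_hist; lia].
by rewrite -(catp_outc_hist sigma' h v t) agree.
Qed.

End Punishment.

Theorem proposition2p14 (Pl V : finType) (owner : V -> Pl) (E : rel V)
  (F : Pl -> {set V}) (v0 : V)
  (hE : forall v, exists v', E v v') (hV : 2 <= #|V|) (hPl : #|Pl| <= #|V|)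
  (s : seq {set Pl}) (hs : valid_order E F (initX F v0) s)
  (lam_star : {ffun VX Pl V -> cost})
  (hstar : exists K, forall k, K <= k -> lam_seq owner E F s k = lam_star)
  (rho0 : nat -> VX Pl V)
  (hrho0 : LamPlays owner E F lam_star (initX F v0) rho0) :
  exists sigma : profile Pl V,
    SPE owner E F sigma (initX F v0) /\
    forall k, outc sigma [::] (initX F v0) k = rho0 k.
Proof.
case: hs => _ s_reach _; have [K lamK] := hstar.
have lam_star_nonempty x : exists r, LamPlays owner E F lam_star x r.
  by rewrite -(lamK K (leqnn K)); apply: lam_seq_nonempty hE _ _.
have lam_star_fix u : connect (EX E F) (initX F v0) u -> ownerX owner u \notin u.2 ->
    lam_star u = update_value owner E F lam_star u.
  move=> x0u; apply: (lam_star_fixpoint hstar).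
  by rewrite s_reach inE; apply/existsP; exists u.1; rewrite -surjective_pairing.
exists (punishing_profile (initX F v0) rho0 lam_star_nonempty); split; first split.
- exact: punishing_profile_valid.
- exact: punishing_profile_NE lam_star_fix hrho0.
- by move=> k; rewrite (outc_punishing _ hrho0) plan_start.
Qed.
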